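(* For $\theta>0$ let $U_1,U_2,\dots$ be i.i.d. $\mathrm{Beta}(1,\theta)$ random variables, and set $X_1=U_1$, $X_k=(1-U_1)\cdots(1-U_{k-1})U_k$ for $k\ge2$. Fix $n\ge1$ and let $\Pi^{\mathrm{gem}}_{n,\theta}$ be the law of $(X_1,\dots,X_n)$ on $\Delta_n=\{(x_1,\dots,x_n):x_k\ge0,\ \sum_{i=1}^n x_i\le1\}$. Then, as $\theta\to\infty$, $\{\Pi^{\mathrm{gem}}_{n,\theta}:\theta>0\}$ satisfies an LDP on $\Delta_n$ with speed $\theta$ and rate function $$S_n(\mathbf x)=\begin{cases}\log\dfrac1{1-\sum_{k=1}^n x_k},&\mathbf x\in\Delta_n,\ \sum_{k=1}^n x_k<1,\\ \infty,&\text{otherwise}.\end{cases}$$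
   Context: An LDP with speed $\theta$ uses normalization $\theta^{-1}\log$ as $\theta\to\infty$. *)

From HB Require Import structures.
From mathcomp Require Import all_boot all_order all_algebra.
From mathcomp Require Import all_classical all_reals all_analysis.
Set Implicit Arguments. Unset Strict Implicit. Unset Printing Implicit Defensive.
Import Order.TTheory GRing.Theory Num.Theory.
Import numFieldNormedType.Exports numFieldTopology.Exports.
Local Open Scope classical_set_scope.
Local Open Scope ring_scope.

Section GEM.
Variable R : realType.

(* Density of Beta(1, theta) w.r.t. Lebesgue measure on [0,1]:
   1/B(1,theta) * (1-u)^(theta-1) = theta * (1-u)^(theta-1). *)
Definition beta1_pdf (theta u : R) : R := theta * (1 - u) `^ (theta - 1).

(* Integral of f(U_1,...,U_n) (f >= 0) for U_1,...,U_n i.i.d. Beta(1,theta),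
   computed as an iterated integral against the product of the Beta(1,theta)
   laws (Tonelli). *)
Fixpoint iid_beta1_int (n : nat) (theta : R) (f : seq R -> \bar R) : \bar R :=
  match n with
  | 0 => f [::]
  | m.+1 => (\int[@lebesgue_measure R]_(u in `[0%R, 1%R])
               ((beta1_pdf theta u)%:E * iid_beta1_int m theta (fun s => f (u :: s))))%E
  end.

(* Stick breaking: r is the remaining mass (1-U_1)...(1-U_{k-1}). *)
Fixpoint stick (r : R) (s : seq R) : seq R :=
  match s with
  | [::] => [::]
  | u :: s' => r * u :: stick (r * (1 - u)) s'
  end.

Definition gem_vec (n : nat) (s : seq R) : 'rV[R]_n :=
  \row_(i < n) nth 0 (stick 1 s) i.

Definition Pi_gem (n : nat) (theta : R) (A : set 'rV[R]_n) : \bar R :=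
  iid_beta1_int n theta (fun s => ((\1_A (gem_vec n s) : R))%:E).

Definition Delta (n : nat) : set 'rV[R]_n :=
  [set x | (forall i, 0 <= x ord0 i) /\ \sum_(i < n) x ord0 i <= 1].

Definition S_rate (n : nat) (x : 'rV[R]_n) : \bar R :=
  if [forall i, 0 <= x ord0 i] && (\sum_(i < n) x ord0 i < 1)
  then (ln (1 / (1 - \sum_(i < n) x ord0 i)))%:E
  else +oo%E.

End GEM.

(* Closed (open) subsets of D are
   exactly the sets F `&` D with F closed (open) in X. *)
Definition log_speed {R : realType} (theta : R) (p : \bar R) : \bar R :=
  if p == 0%E then -oo%E else (ln (fine p) / theta)%:E.

Definition LDP {R : realType} {X : topologicalType} (D : set X)
    (P : R -> set X -> \bar R) (I : X -> \bar R) : Prop :=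
  [/\ (* I is a rate function on D: nonnegative and lower semicontinuous *)
      (forall x, D x -> (0 <= I x)%E),
      (forall a : R, exists C : set X, closed C /\
          [set x | D x /\ (I x <= a%:E)%E] = C `&` D),
      (forall F : set X, closed F ->
         (limf_esup (fun theta => log_speed theta (P theta (F `&` D))) (pinfty_nbhs R)
           <= - ereal_inf (I @` (F `&` D)))%E) &
      (forall G : set X, open G ->
         (- ereal_inf (I @` (G `&` D))
           <= limf_einf (fun theta => log_speed theta (P theta (G `&` D))) (pinfty_nbhs R))%E)].

From HB Require Import structures.
From mathcomp Require Import all_boot all_order all_algebra.
From mathcomp Require Import all_classical all_reals all_analysis.
From mathcomp Require Import ring lra.
Import numFieldNormedType.Exports numFieldTopology.Exports.
Set Implicit Arguments. Unset Strict Implicit. Unset Printing Implicit Defensive.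
Import Order.TTheory GRing.Theory Num.Theory.
Local Open Scope classical_set_scope.
Local Open Scope ring_scope.

(* Since [1 - sum_k X_k = prod_k (1 - U_k)], the rate is [S_n(X) = - ln prod_k (1 - U_k)]
   and the joint density [th^n prod_k (1 - u_k)^(th - 1)] of the U_k equals
   [th^n exp (- (th - 1) S_n)].  Upper bound: where [S_n >= l] the density is at most
   [th^n exp (- (th - 1) l)], whose [th^-1 log] tends to [- l].  Lower bound: invert
   the stick breaking at a point [x] with [sum x < 1]; the box of break points
   [u_k <= u'_k <= 1 - (1 - u_k) rho] is mapped into a small ball around [x] (the
   stick breaking is Lipschitz) and has probability at least
   [(th rho^(th - 1) (1 - rho))^n (1 - sum x)^th]; let [th -> oo], then [rho -> 1]. *)

Section GEMLargeDeviations.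
Variable R : realType.
Local Notation mu := (@lebesgue_measure R).
Local Open Scope ereal_scope.

Lemma ge0_le_integral_patch (D E : set R) (f g : R -> \bar R) :
  (forall x, D x -> 0 <= f x) -> (forall x, E x -> 0 <= g x) ->
  (forall x, (f \_ D) x <= (g \_ E) x) ->
  \int[mu]_(x in D) f x <= \int[mu]_(x in E) g x.
Proof.
move=> f0 g0 fg; rewrite ge0_integralE // [leRHS]ge0_integralE //.
apply: ereal_sup_le => _ [h hf <-]; exists h => //= x.
exact: le_trans (hf x) (fg x).
Qed.

Lemma integral_itv_cst (a b c : R) : (a < b)%R ->
  \int[mu]_(x in `[a, b]) (cst c%:E) x = (c * (b - a))%:E.
Proof.
by move=> ab; rewrite integral_cst //= lebesgue_measure_itv /= lte_fin ab -EFinD -EFinM.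
Qed.

Lemma beta1_pdf_ge0 (th u : R) : (0 <= th)%R -> (0 <= beta1_pdf th u)%R.
Proof. by move=> th0; rewrite /beta1_pdf mulr_ge0 // powR_ge0. Qed.

Lemma iid_beta1_int_ge0 n (th : R) f : (0 <= th)%R -> (forall s, 0 <= f s) ->
  0 <= iid_beta1_int n th f.
Proof.
elim: n f => [|n IH] f th0 f0 //=.
apply: integral_ge0 => x _; rewrite mule_ge0 ?lee_fin ?beta1_pdf_ge0 //.
exact: IH.
Qed.

Lemma beta1_pdf_powR_cancel (th x : R) : (x < 1)%R ->
  (beta1_pdf th x * (1 - x) `^ (1 - th))%R = th.
Proof.
move=> x1; rewrite /beta1_pdf -mulrA -powRD; last by apply/implyP => _; rewrite subr_eq0 gt_eqF.
by rewrite addrA subrK subrr powRr0 mulr1.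
Qed.

Definition in_unit_co (u : R) := ((0 <= u) && (u < 1))%R.

Lemma prod_subr_gt0 (s : seq R) : all in_unit_co s -> (0 < \prod_(u <- s) (1 - u))%R.
Proof.
move=> hs; rewrite big_seq; apply: prodr_gt0 => u /(allP hs) /andP[_].
by rewrite subr_gt0.
Qed.

(* Against the density [th^n prod (1 - u_i)^(th - 1)] of [n] i.i.d. Beta(1, th)
   variables, the weight [prod (1 - u_i)^(1 - th)] has total mass exactly [th^n]. *)
Lemma iid_beta1_int_le n (th a : R) f : (1 < th)%R -> (0 <= a)%R ->
  (forall s, 0 <= f s) ->
  (forall s, size s = n -> all in_unit_co s ->
     f s <= (a * (\prod_(u <- s) (1 - u)) `^ (1 - th))%:E) ->
  iid_beta1_int n th f <= (a * th ^+ n)%:E.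
Proof.
move=> th1; have th0 : (0 <= th)%R by rewrite ltW // (lt_trans ltr01).
elim: n a f => [|n IH] a f a0 f0 hf /=.
  by have := hf [::] erefl erefl; rewrite big_nil powR1 expr0.
have -> : (a * th ^+ n.+1)%:E = \int[mu]_(x in `[0%R, 1%R]) (cst (a * th ^+ n.+1)%:E) x.
  by rewrite integral_itv_cst ?ltr01 // subr0 mulr1.
apply: ge0_le_integral_patch => [x _|x _|x].
- by rewrite mule_ge0 ?lee_fin ?beta1_pdf_ge0 ?iid_beta1_int_ge0.
- by rewrite lee_fin mulr_ge0 ?exprn_ge0.
rewrite /patch; case: ifPn => //; rewrite inE /= in_itv /= => /andP[x0].
rewrite le_eqVlt => /orP[/eqP->|x1].
  rewrite /beta1_pdf subrr powR0; last by rewrite subr_eq0 gt_eqF.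
  by rewrite mulr0 mul0e lee_fin mulr_ge0 ?exprn_ge0.
have IHx : iid_beta1_int n th (fun s => f (x :: s)) <=
    (a * (1 - x) `^ (1 - th) * th ^+ n)%:E.
  apply: IH => [|s|s ss hs]; first by rewrite mulr_ge0 ?powR_ge0.
    exact: f0.
  have xs_co : all in_unit_co (x :: s) by rewrite /= hs /in_unit_co x0 x1.
  have := hf (x :: s) (congr1 S ss) xs_co.
  rewrite big_cons powRM ?mulrA //; first by rewrite subr_ge0 ltW.
  exact: ltW (prod_subr_gt0 hs).
apply: le_trans (lee_wpmul2l _ IHx) _; first by rewrite lee_fin beta1_pdf_ge0.
have := beta1_pdf_powR_cancel th x1.
set p := beta1_pdf th x; set q := ((1 - x) `^ (1 - th))%R => pq.
rewrite -EFinM lee_fin; suff -> : (p * (a * q * th ^+ n) = a * th ^+ n.+1)%R by [].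
by rewrite exprS -pq; ring.
Qed.

Definition in_box (rho : R) (ts s : seq R) :=
  all2 (fun t u => (t <= u) && (u <= 1 - (1 - t) * rho))%R ts s.

(* On the box [t, 1 - (1 - t) rho] the density is at least
   [th ((1 - t) rho)^(th - 1)], and the box has length [(1 - t)(1 - rho)]. *)
Lemma iid_beta1_int_ge (th rho c : R) ts f :
  (1 <= th)%R -> (0 < rho < 1)%R -> (0 <= c)%R -> all in_unit_co ts ->
  (forall s, 0 <= f s) -> (forall s, in_box rho ts s -> c%:E <= f s) ->
  (c * (th * rho `^ (th - 1) * (1 - rho)) ^+ size ts *
     (\prod_(t <- ts) (1 - t)) `^ th)%:E <= iid_beta1_int (size ts) th f.
Proof.
move=> th1 /andP[r0 r1]; have th0 : (0 <= th)%R by rewrite (le_trans ler01).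
elim: ts c f => [|t ts IH] c f c0 /= hts f0 hf.
  by rewrite big_nil powR1 expr0 !mulr1; apply: hf.
move: hts => /andP[/andP[t0 t1] hts].
have t1' : (0 < 1 - t)%R by rewrite subr_gt0.
set q := (th * rho `^ (th - 1) * (1 - rho))%R.
set b := (1 - (1 - t) * rho)%R.
set W := (c * q ^+ size ts * (\prod_(u <- ts) (1 - u)) `^ th)%R.
set K := (th * ((1 - t) * rho) `^ (th - 1) * W)%R.
have W0 : (0 <= W)%R.
  by rewrite /W /q !mulr_ge0 ?exprn_ge0 ?powR_ge0 ?mulr_ge0 ?powR_ge0 // subr_ge0 ltW.
have tb : (t < b)%R.
  by rewrite /b ltrBrDl addrC -ltrBrDl -[ltRHS]mulr1 ltr_pM2l.
have b1 : (b <= 1)%R by rewrite /b gerBl mulr_ge0 // ltW.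
have -> : (c * q ^+ (size ts).+1 * (\prod_(u <- t :: ts) (1 - u)) `^ th)%R
    = (K * (b - t))%R.
  have -> : (b - t = (1 - t) * (1 - rho))%R by rewrite /b; ring.
  rewrite /K /W big_cons !powRM ?(ltW t1') ?(ltW r0) ?(ltW (prod_subr_gt0 hts)) //.
  rewrite -(mulr_powRB1 (ltW t1') (lt_le_trans ltr01 th1)) exprS /q; ring.
rewrite -integral_itv_cst //; apply: ge0_le_integral_patch => [x _|x _|x].
- by rewrite lee_fin /K mulr_ge0 // mulr_ge0 // powR_ge0.
- by rewrite mule_ge0 ?lee_fin ?beta1_pdf_ge0 ?iid_beta1_int_ge0.
rewrite /patch; case: ifPn => [|_]; last first.
  by case: ifPn => // _; rewrite mule_ge0 ?lee_fin ?beta1_pdf_ge0 ?iid_beta1_int_ge0.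
rewrite inE /= in_itv /= => /andP[tx xb].
rewrite ifT; last by rewrite inE /= in_itv /= (le_trans t0 tx) (le_trans xb b1).
rewrite /K EFinM; apply: lee_pmul.
- by rewrite lee_fin mulr_ge0 ?powR_ge0.
- by rewrite lee_fin.
- rewrite lee_fin /beta1_pdf ler_pM2l ?(lt_le_trans ltr01) //.
  apply: ge0_ler_powR; rewrite ?nnegrE ?subr_ge0 ?(le_trans xb b1) //.
  - by rewrite mulr_ge0 // ltW.
  - by rewrite lerBrDl addrC -lerBrDl.
- by apply: IH => // s hs; apply: hf; rewrite /= tx xb.
Qed.

Local Close Scope ereal_scope.

Definition in_unit (u : R) := (0 <= u) && (u <= 1).

Lemma in_unit_co_unit (s : seq R) : all in_unit_co s -> all in_unit s.
Proof. by apply: sub_all => u /andP[u0 u1]; rewrite /in_unit u0 ltW. Qed.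

Lemma prod_subr_ge0 (s : seq R) : all in_unit s -> 0 <= \prod_(u <- s) (1 - u).
Proof.
move=> hs; rewrite big_seq; apply: prodr_ge0 => u /(allP hs) /andP[_].
by rewrite subr_ge0.
Qed.

Lemma size_stick (r : R) s : size (stick r s) = size s.
Proof. by elim: s r => //= u s IH r; rewrite IH. Qed.

Lemma sum_stick (r : R) s : \sum_(x <- stick r s) x = r - r * \prod_(u <- s) (1 - u).
Proof.
elim: s r => [|u s IH] r /=; first by rewrite !big_nil mulr1 subrr.
by rewrite !big_cons IH; ring.
Qed.

Lemma stick_ge0 (r : R) s : 0 <= r -> all in_unit s -> all (>= 0) (stick r s).
Proof.
elim: s r => //= u s IH r r0 /andP[/andP[u0 u1] hs].
by rewrite mulr_ge0 //= IH // mulr_ge0 // subr_ge0.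
Qed.

Fixpoint unstick (r : R) (xs : seq R) : seq R :=
  if xs is x :: xs' then x / r :: unstick (r - x) xs' else [::].

Lemma size_unstick r xs : size (unstick r xs) = size xs.
Proof. by elim: xs r => //= x xs IH r; rewrite IH. Qed.

Lemma unstickK r xs : all (>= 0) xs -> \sum_(x <- xs) x < r ->
  stick r (unstick r xs) = xs /\ all in_unit_co (unstick r xs).
Proof.
elim: xs r => [|x xs IH] r //= /andP[x0 xs0]; rewrite big_cons => xsr.
have sum0 : 0 <= \sum_(y <- xs) y by rewrite big_seq sumr_ge0 // => y /(allP xs0).
have r0 : 0 < r by lra.
have [IHs IHu] := IH (r - x) xs0 ltac:(lra).
rewrite mulrBr mulr1 mulrCA divff ?gt_eqF // mulr1 IHs IHu andbT; split => //.
by rewrite /in_unit_co divr_ge0 ?(ltW r0) //= ltr_pdivrMr // mul1r; lra.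
Qed.

Lemma dist_mul_le (r r' u t : R) : 0 <= r <= 1 -> 0 <= r' <= 1 ->
  0 <= u <= 1 -> `|r * u - r' * t| <= `|r - r'| + `|u - t|.
Proof.
move=> /andP[r0 r1] /andP[r'0 r'1] /andP[u0 u1].
have -> : r * u - r' * t = (r - r') * u + r' * (u - t) by ring.
apply: le_trans (ler_normD _ _) _; rewrite !normrM (ger0_norm u0) (ger0_norm r'0).
by apply: lerD; [apply: ler_piMr | apply: ler_piMl].
Qed.

(* Each stick piece depends 1-Lipschitz on the remaining mass and on every
   earlier break point, whence the error grows linearly along the sequence. *)
Lemma dist_stick_le (s ts : seq R) (r r' eta : R) :
  all in_unit s -> all in_unit ts -> all2 (fun u t => `|u - t| <= eta) s ts ->
  0 <= eta -> 0 <= r <= 1 -> 0 <= r' <= 1 ->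
  forall i, `|nth 0 (stick r s) i - nth 0 (stick r' ts) i| <= `|r - r'| + i.+1%:R * eta.
Proof.
elim: s ts r r' => [|u s IH] [|t ts] //= r r' + + + eta0 hr hr' i.
  by rewrite !nth_nil subrr normr0 addr_ge0 // mulr_ge0.
move=> /andP[hu hs] /andP[ht hts] /andP[hut hst].
case: i => [|i] /=.
  by rewrite mul1r (le_trans (dist_mul_le _ hr hr' hu)) // lerD2l.
have mass_unit (v w : R) : 0 <= v <= 1 -> 0 <= w <= 1 -> 0 <= v * (1 - w) <= 1.
  move=> /andP[v0 v1] /andP[w0 w1].
  by rewrite mulr_ge0 ?subr_ge0 //= mulr_ile1 ?subr_ge0 // gerBl.
apply: le_trans (IH _ _ _ hs hts hst eta0 (mass_unit _ _ hr hu) (mass_unit _ _ hr' ht) i) _.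
have hu' : 0 <= 1 - u <= 1 by case/andP: hu => u0 u1; rewrite subr_ge0 u1 gerBl.
have := dist_mul_le (1 - t) hr hr' hu'.
have -> : 1 - u - (1 - t) = - (u - t) by ring.
rewrite normrN -[i.+2%:R]natr1 mulrDl mul1r; lra.
Qed.

Lemma sum_gem_vec n (s : seq R) : size s = n ->
  \sum_(i < n) gem_vec n s ord0 i = 1 - \prod_(u <- s) (1 - u).
Proof.
move=> ss; rewrite (eq_bigr (fun i : 'I_n => nth 0 (stick 1 s) i)) => [|i _]; last first.
  by rewrite mxE.
by rewrite -[in RHS](mul1r (\prod_(u <- s) _)) -sum_stick (big_nth 0) size_stick ss big_mkord.
Qed.

Lemma gem_vec_ge0 n (s : seq R) i : all in_unit s -> 0 <= gem_vec n s ord0 i.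
Proof.
move=> hs; rewrite mxE; have /allP := stick_ge0 ler01 hs.
case: (ltnP i (size (stick 1 s))) => [lti|gei] ge0; last by rewrite nth_default.
by apply: ge0; rewrite mem_nth.
Qed.

Lemma Delta_gem_vec n (s : seq R) : size s = n -> all in_unit s -> Delta (gem_vec n s).
Proof.
move=> ss hs; split => [i|]; first exact: gem_vec_ge0.
by rewrite sum_gem_vec // gerBl prod_subr_ge0.
Qed.

Lemma S_rate_gem_vec n (s : seq R) : size s = n -> all in_unit_co s ->
  S_rate (gem_vec n s) = (- ln (\prod_(u <- s) (1 - u)))%:E.
Proof.
move=> ss hs; have P0 := prod_subr_gt0 hs; rewrite /S_rate.
have -> : [forall i, 0 <= gem_vec n s ord0 i].
  by apply/forallP => i; rewrite gem_vec_ge0 // in_unit_co_unit.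
by rewrite sum_gem_vec // ltrBlDr ltrDl P0 opprB addrC subrK div1r lnV.
Qed.

Local Open Scope ereal_scope.

Lemma limf_esup_le (f : R -> \bar R) (F : set_system R) V c :
  F V -> (forall x, V x -> f x <= c) -> limf_esup f F <= c.
Proof.
move=> FV fc; rewrite limf_esupE; apply: le_trans (ereal_inf_lbound _) _.
  by exists V.
by apply: ge_ereal_sup => _ [x Vx <-]; exact: fc.
Qed.

Lemma limf_einf_ge (f : R -> \bar R) (F : set_system R) V c :
  F V -> (forall x, V x -> c <= f x) -> c <= limf_einf f F.
Proof.
move=> FV fc; rewrite limf_einfE; apply: le_trans _ (ereal_sup_ubound _).
  2: by exists V.
by apply: le_ereal_inf_tmp => _ [x Vx <-]; exact: fc.
Qed.

Lemma log_speed_le (th C : R) p : (0 < th)%R -> (0 < C)%R -> 0 <= p -> p <= C%:E ->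
  log_speed th p <= (ln C / th)%:E.
Proof.
move=> th0 C0 p0 pC; rewrite /log_speed; case: ifPn => [_|pn0]; first exact: leNye.
have pfin : p \is a fin_num by rewrite ge0_fin_numE // (le_lt_trans pC) ?ltry.
move: pC p0 pn0; rewrite -(fineK pfin) lee_fin eqe => pC p0 pn0.
rewrite lee_fin ler_pM2r ?invr_gt0 // ler_ln ?posrE //.
by rewrite lt_neqAle eq_sym pn0 -lee_fin.
Qed.

Lemma log_speed_ge (th c : R) p : (0 < th)%R -> (0 < c)%R -> c%:E <= p ->
  p \is a fin_num -> (ln c / th)%:E <= log_speed th p.
Proof.
move=> th0 c0 cp pfin; rewrite /log_speed gt_eqF; last exact: lt_le_trans cp.
move: cp; rewrite -(fineK pfin) !lee_fin => cp.
by rewrite ler_pM2r ?invr_gt0 // ler_ln ?posrE // (lt_le_trans c0).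
Qed.

Local Close Scope ereal_scope.

Lemma ln_le_eventually (a b e : R) : 0 <= a -> 0 <= b -> 0 < e ->
  exists2 M, 1 <= M & forall th, M < th -> a + b * ln th <= e * th.
Proof.
move=> a0 b0 e0; set K := 2 * b / e + 1.
have K0 : 0 < K by rewrite ltr_wpDl // divr_ge0 ?mulr_ge0 // ltW.
have bK : b / K <= e / 2.
  rewrite ler_pdivrMr //.
  have -> : e / 2 * K = b + e / 2 by rewrite /K; field; rewrite gt_eqF.
  by rewrite lerDl divr_ge0 // ltW.
set c := 2 * (a + b * `|ln K|) / e.
have c0 : 0 <= c by rewrite /c !(divr_ge0, mulr_ge0, addr_ge0) // ltW.
exists (1 + c); first by rewrite lerDl.
move=> th hth.
have th0 : 0 < th by lra.
have ln_th : ln th <= th / K + `|ln K|.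
  have := ln_sublinear (divr_gt0 th0 K0); rewrite ln_div ?posrE //.
  have := ler_norm (ln K); lra.
have lin : b * (th / K) <= e / 2 * th by rewrite mulrA mulrAC ler_wpM2r // ltW.
have big : 2 * (a + b * `|ln K|) <= e * th.
  by rewrite -ler_pdivrMl // mulrC -/c ltW //; lra.
have := ler_wpM2l b0 ln_th; lra.
Qed.

Lemma Pi_gem_ge0 n (th : R) (A : set 'rV[R]_n) : 0 <= th -> (0 <= Pi_gem th A)%E.
Proof. by move=> th0; apply: iid_beta1_int_ge0 => // s; rewrite lee_fin indicE. Qed.

Lemma Pi_gem_le n (A : set 'rV[R]_n) (th l : R) : 1 < th ->
  (forall s, size s = n -> all in_unit_co s -> A (gem_vec n s) ->
     l <= - ln (\prod_(u <- s) (1 - u))) ->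
  (Pi_gem th A <= (expR (- l * (th - 1)) * th ^+ n)%:E)%E.
Proof.
move=> th1 hA; apply: iid_beta1_int_le => // s ss hs; rewrite indicE.
have P0 := prod_subr_gt0 hs.
case: (boolP (gem_vec n s \in A)) => [|_]; last by rewrite lee_fin mulr_ge0 ?expR_ge0 ?powR_ge0.
rewrite inE => /(hA s ss hs) ls; rewrite lee_fin /powR gt_eqF // -expRD.
rewrite -[leLHS]expR0 ler_expR.
have th1' : 0 <= th - 1 by lra.
by have := ler_wpM2l th1' ls; nra.
Qed.

Lemma pinfty_nbhs_gt (M : R) : pinfty_nbhs R [set th | M < th].
Proof. by exists M; split => //; exact: num_real. Qed.

Lemma limsup_log_Pi_gem_le n (A : set 'rV[R]_n) (l : R) : 0 <= l ->
  (forall x, A x -> (l%:E <= S_rate x)%E) ->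
  (limf_esup (fun th => log_speed th (Pi_gem th A)) (pinfty_nbhs R) <= (- l)%:E)%E.
Proof.
move=> l0 hA; apply/lee_addgt0Pr => e e0.
have [M M1 hM] := ln_le_eventually l0 (ler0n _ n) e0.
apply: limf_esup_le (pinfty_nbhs_gt M) _ => th /= Mth.
have th1 : 1 < th by lra.
have th0 : 0 < th by lra.
have C0 : 0 < expR (- l * (th - 1)) * th ^+ n by rewrite mulr_gt0 ?expR_gt0 ?exprn_gt0.
apply: le_trans (log_speed_le th0 C0 (Pi_gem_ge0 _ (ltW th0)) (Pi_gem_le th1 _)) _.
  by move=> s ss hs /hA; rewrite S_rate_gem_vec // lee_fin.
rewrite -EFinD lee_fin ler_pdivrMr // lnM ?posrE ?expR_gt0 ?exprn_gt0 //.
by rewrite expRK lnXn // -mulr_natl; have := hM th Mth; nra.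
Qed.

Lemma ball_rowP n (x y : 'rV[R]_n) e : 0 < e ->
  (forall i, `|x ord0 i - y ord0 i| < e) -> ball x e y.
Proof. by move=> e0 xy; split => // i j; rewrite (ord1 i); exact: xy. Qed.

Lemma box_near (rho : R) ts s : 0 < rho <= 1 -> all in_unit_co ts -> in_box rho ts s ->
  [/\ size s = size ts, all in_unit s & all2 (fun u t => `|u - t| <= 1 - rho) s ts].
Proof.
move=> /andP[r0 r1]; elim: ts s => [|t ts IH] [|u s] //= /andP[/andP[t0 t1] hts].
move=> /andP[/andP[tu ub] hb]; have [-> -> ->] := IH s hts hb.
have : 0 < (1 - t) * rho by rewrite mulr_gt0 // subr_gt0.
have : (1 - t) * (1 - rho) <= 1 - rho by rewrite ler_piMl ?subr_ge0 // gerBl.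
rewrite /in_unit ger0_norm ?subr_ge0 // (le_trans t0 tu) !andbT => h1 h2.
by split => //; nra.
Qed.

Lemma Pi_gem_ge n (A : set 'rV[R]_n) (x : 'rV[R]_n) (th rho del : R) :
  Delta x -> \sum_(i < n) x ord0 i < 1 -> 1 <= th -> 0 < rho < 1 ->
  n%:R * (1 - rho) < del -> ball x del `<=` A ->
  (((th * rho `^ (th - 1) * (1 - rho)) ^+ n * (1 - \sum_(i < n) x ord0 i) `^ th)%:E
    <= Pi_gem th (A `&` @Delta R n))%E.
Proof.
move=> [x0 _] sx1 th1 /andP[r0 r1] rdel xA.
set xs := [seq x ord0 i | i <- enum 'I_n].
have xs0 : all (>= 0) xs by apply/allP => _ /mapP[i _ ->].
have sum_xs : \sum_(u <- xs) u = \sum_(i < n) x ord0 i by rewrite big_map big_enum.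
have [stick_ts ts_co] : stick 1 (unstick 1 xs) = xs /\ all in_unit_co (unstick 1 xs).
  by apply: unstickK; rewrite ?sum_xs.
set ts := unstick 1 xs in stick_ts ts_co.
have size_ts : size ts = n by rewrite size_unstick size_map size_enum_ord.
have prod_ts : \prod_(u <- ts) (1 - u) = 1 - \sum_(i < n) x ord0 i.
  by have := sum_stick 1 ts; rewrite stick_ts sum_xs !mul1r => ->; rewrite opprB addrC subrK.
rewrite -prod_ts.
have := @iid_beta1_int_ge th rho 1 ts
  (fun s => ((\1_(A `&` @Delta R n) (gem_vec n s) : R))%:E).
rewrite size_ts mul1r; apply; rewrite ?r0 ?r1 // => s hb.
have rho01 : 0 < rho <= 1 by rewrite r0 ltW.
have rho1' : 0 <= 1 - rho by rewrite subr_ge0 ltW.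
have [size_s s_unit near_ts] := box_near rho01 ts_co hb.
rewrite size_ts in size_s.
rewrite indicE; suff -> : gem_vec n s \in A `&` @Delta R n by [].
rewrite inE; split; last exact: Delta_gem_vec.
apply: xA; apply: ball_rowP => [|i]; first by apply: le_lt_trans rdel; rewrite mulr_ge0.
have -> : x ord0 i = nth 0 (stick 1 ts) i.
  by rewrite stick_ts (nth_map i) ?size_enum_ord // nth_ord_enum.
have unit1 : 0 <= (1 : R) <= 1 by rewrite ler01 lexx.
have := dist_stick_le s_unit (in_unit_co_unit ts_co) near_ts rho1' unit1 unit1 i.
rewrite /gem_vec mxE distrC subrr normr0 add0r => /le_lt_trans; apply.
by apply: le_lt_trans rdel; rewrite ler_wpM2r ?ler_nat.
Qed.

Lemma Pi_gem_fin_num n (th : R) (A : set 'rV[R]_n) : 1 < th -> Pi_gem th A \is a fin_num.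
Proof.
move=> th1; rewrite ge0_fin_numE ?Pi_gem_ge0 ?(le_trans ler01 (ltW th1)) //.
apply: le_lt_trans (Pi_gem_le (l := 0) th1 _) (ltry _) => s _ hs _.
rewrite oppr_ge0 ln_le0 // big_seq prodr_ile1 // => u /(allP hs) /andP[u0 u1].
by rewrite subr_ge0 gerBl u0 ltW.
Qed.

Lemma liminf_log_Pi_gem_ge n (G : set 'rV[R]_n) (x : 'rV[R]_n) : (0 < n)%N ->
  open G -> G x -> Delta x -> \sum_(i < n) x ord0 i < 1 ->
  ((ln (1 - \sum_(i < n) x ord0 i))%:E <=
    limf_einf (fun th => log_speed th (Pi_gem th (G `&` @Delta R n))) (pinfty_nbhs R))%E.
Proof.
move=> n0 oG Gx Dx sx1; set sig := \sum_(i < n) x ord0 i.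
have [del del0 xG] : exists2 del, 0 < del & ball x del `<=` G.
  by apply/nbhs_ballP; apply: open_nbhs_nbhs.
apply/lee_subgt0Pr => e e0.
have nR : 0 < n%:R :> R by rewrite ltr0n.
(* [rho] close enough to 1 for the box to stay in the ball and to cost at most
   [e / 2] per unit of speed. *)
set rho := Num.max (expR (- (e / (2 * n%:R)))) (1 - del / (2 * n%:R)).
have hd : 0 < del / (2 * n%:R) by rewrite divr_gt0 // mulr_gt0.
have he : 0 < e / (2 * n%:R) by rewrite divr_gt0 // mulr_gt0.
have rho01 : 0 < rho < 1.
  by rewrite lt_max expR_gt0 gt_max expR_lt1 oppr_lt0 he gtrBl hd.
have rho_del : n%:R * (1 - rho) < del.
  have : 1 - rho <= del / (2 * n%:R) by rewrite lerBlDr -lerBlDl le_max lexx orbT.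
  move=> /(ler_wpM2l (ltW nR)) /le_lt_trans; apply.
  have -> : n%:R * (del / (2 * n%:R)) = del / 2 by field; rewrite gt_eqF.
  lra.
have ln_rho : - (e / 2) <= n%:R * ln rho <= 0.
  case/andP: rho01 => r0 r1; apply/andP; split; last first.
    by rewrite mulr_ge0_le0 // ?ln_le0 // ltW.
  have -> : e / 2 = n%:R * (e / (2 * n%:R)) by field; rewrite gt_eqF.
  rewrite -mulrN ler_wpM2l ?(ltW nR) // -[leLHS]expRK ler_ln ?posrE ?expR_gt0 //.
  by rewrite le_max lexx.
have [M M1 hM] := ln_le_eventually (normr_ge0 (n%:R * ln (1 - rho))) (lexx 0)
  (divr_gt0 e0 (ltr0n _ 2)).
apply: limf_einf_ge (pinfty_nbhs_gt M) _ => th /= Mth.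
have th1 : 1 < th by lra.
have th0 : 0 < th by lra.
set q := th * rho `^ (th - 1) * (1 - rho).
have q0 : 0 < q.
  by case/andP: rho01 => r0 r1; rewrite mulr_gt0 ?subr_gt0 // mulr_gt0 // powR_gt0.
have W0 : 0 < q ^+ n * (1 - sig) `^ th by rewrite mulr_gt0 ?exprn_gt0 // powR_gt0 // subr_gt0.
apply: le_trans (log_speed_ge th0 W0 (Pi_gem_ge Dx sx1 (ltW th1) rho01 rho_del xG)
  (Pi_gem_fin_num _ th1)).
rewrite -EFinB lee_fin ler_pdivlMr //.
rewrite lnM ?posrE ?exprn_gt0 ?powR_gt0 ?subr_gt0 // lnXn // ln_powR -mulr_natl.
case/andP: rho01 => r0 r1.
rewrite /q lnM ?posrE ?mulr_gt0 ?powR_gt0 ?subr_gt0 // lnM ?posrE ?powR_gt0 // ln_powR.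
have ln_th : 0 <= n%:R * ln th by rewrite mulr_ge0 // ln_ge0 // ltW.
have := hM th Mth; rewrite mul0r addr0 => /lerNnormlW ln_1rho.
have /andP[ln_rho_lo ln_rho_hi] := ln_rho.
have : - (e / 2) * (th - 1) <= (th - 1) * (n%:R * ln rho).
  by rewrite mulrC ler_wpM2l // subr_ge0 ltW.
nra.
Qed.

Lemma S_rate_ge0 n (x : 'rV[R]_n) : Delta x -> (0 <= S_rate x)%E.
Proof.
move=> [x0 _]; rewrite /S_rate; case: ifPn => [/andP[_ sx1]|_]; last exact: leey.
by rewrite lee_fin ln_ge0 // div1r invf_ge1 ?subr_gt0 // gerBl sumr_ge0.
Qed.

Lemma S_rate_le n (x : 'rV[R]_n) (a : R) : Delta x ->
  (S_rate x <= a%:E)%E = (\sum_(i < n) x ord0 i <= 1 - expR (- a)).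
Proof.
move=> [x0 _]; rewrite /S_rate.
have -> : [forall i, 0 <= x ord0 i] by apply/forallP.
have [sx1|sx1] /= := ltP (\sum_(i < n) x ord0 i) 1; last first.
  by apply/esym/negbTE; rewrite -ltNge (lt_le_trans _ sx1) // gtrBl expR_gt0.
rewrite lee_fin div1r lnV ?posrE ?subr_gt0 // lerNl -ler_expR lnK ?posrE ?subr_gt0 //.
by rewrite lerBrDl addrC -lerBrDl.
Qed.

Lemma closed_sum_row_le n (c : R) :
  closed [set x : 'rV[R]_n | \sum_(i < n) x ord0 i <= c].
Proof.
have sum_cont : continuous (fun x : 'rV[R]_n => \sum_(i < n) x ord0 i).
  apply: (@continuous_big _ _ +%R 0 xpredT (fun p => add_continuous p)) => i _.
  exact: coord_continuous.
exact: (continuous_closedP _).1 sum_cont _ (@closed_le _ c).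
Qed.

End GEMLargeDeviations.

Lemma lee_oppe_of_bounds (R : realType) (L I : \bar R) : (0 <= I)%E ->
  (forall l : R, 0 <= l -> (l%:E <= I)%E -> (L <= (- l)%:E)%E) -> (L <= - I)%E.
Proof.
case: I => [r r0 hL|_ hL|//]; first by apply: hL; rewrite -?lee_fin.
case: L hL => [r| |] hL //; last by have := hL 0 (lexx 0) (leey _).
have := hL (`|r| + 1)%R (addr_ge0 (normr_ge0 r) ler01) (leey _).
rewrite lee_fin => hr; exfalso; have := lerNnormlW (lexx `|r|); lra.
Qed.

Theorem lemma2p1 (R : realType) (n : nat) : (0 < n)%N ->
  LDP (@Delta R n) (fun theta => @Pi_gem R n theta) (@S_rate R n).
Proof.
move=> n0; split.
- exact: S_rate_ge0.
- move=> a; exists [set x : 'rV[R]_n | \sum_(i < n) x ord0 i <= 1 - expR (- a)].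
  split; first exact: closed_sum_row_le.
  apply/seteqP; split => x /=.
    by move=> [Dx]; rewrite S_rate_le.
  by move=> [sx Dx]; rewrite S_rate_le.
- move=> F _; apply: lee_oppe_of_bounds.
    by apply: le_ereal_inf_tmp => _ [x [_ Dx] <-]; exact: S_rate_ge0.
  move=> l l0 lI; apply: limsup_log_Pi_gem_le => // x Fx.
  by apply: le_trans lI _; apply: ereal_inf_lbound; exists x.
- move=> G oG; rewrite leeNl; apply: le_ereal_inf_tmp => _ [x [Gx Dx] <-].
  rewrite leeNl /S_rate; case: ifPn => [/andP[_ sx1]|_]; last exact: leNye.
  rewrite div1r lnV ?posrE ?subr_gt0 // EFinN oppeK.
  exact: liminf_log_Pi_gem_ge.
Qed.
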